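(* Assume $|B|<m$ and let $\mathcal S_3=\{(w_1+uw_2,w_3)\in\mathcal R^m: w_1\in\Delta_A,\ w_2\in\Delta_B^c,\ w_3\in\Delta_C\}$. Then $\mathscr C_{\mathcal S_3}$ is a linear code over $R$ with parameters $\big(q^{|A|+|C|}(q^m-q^{|B|}),\ q^{m+|A|+|C|},\ 2(q-1)q^{|A|+|C|-1}(q^m-q^{|B|})\big)$ and Lee weight distribution: weight $0$ with frequency $1$; weight $2(q-1)q^{|A|+|C|-1}(q^m-q^{|B|})$ with frequency $q^{m+|A|+|C|}-2q^{m-|B|}+q^{m-|A\cup B|}$; weight $(q-1)q^{|A|+|C|-1}(2q^m-q^{|B|})$ with frequency $2(q^{m-|B|}-q^{m-|A\cup B|})$; weight $2(q-1)q^{m+|A|+|C|-1}$ with frequency $q^{m-|A\cup B|}-1$. Consequently $\mathscr C_{\mathcal S_3}$ is a $2$-weight code if $A\cup B=[m]$ or $A\subseteq B$, and a $3$-weight code otherwise.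
   Context: Let $q$ be a prime power, $\mathbb F_q$ the field of order $q$, $m\ge 2$ an integer and $[m]=\{1,\dots,m\}$. For $v\in\mathbb F_q^m$, $\mathrm{supp}(v)=\{i:v_i\ne0\}$ and $wt_H$ is Hamming weight. For nonempty $P\subseteq[m]$, $\Delta_P=\{v\in\mathbb F_q^m:\mathrm{supp}(v)\subseteq P\}$, $\Delta_P^c=\mathbb F_q^m\setminus\Delta_P$, $\Delta_P^*=\Delta_P\setminus\{\mathbf 0\}$. $A,B,C$ denote nonempty subsets of $[m]$. Let $R=\mathbb F_q[u]/\langle u^2\rangle$ and $\mathcal R=R\times\mathbb F_q$; each element of $\mathcal R^m$ is uniquely $(d+ue,f)$ with $d,e,f\in\mathbb F_q^m$. Define $\langle(d_1+ue_1,f_1),(d_2+ue_2,f_2)\rangle=(d_1+ue_1)\cdot(d_2+ue_2)+u\,f_1\cdot f_2\in R$, where $x\cdot y=\sum_i x_iy_i$. For a nonempty $\mathcal D\subseteq\mathcal R^m$ listed in a fixed order, $\mathscr C_{\mathcal D}=\{(\langle r,s\rangle)_{s\in\mathcal D}: r\in\mathcal R^m\}\subseteq R^{|\mathcal D|}$, an $R$-submodule (linear code over $R$). The Gray map $\Phi:R^n\to\mathbb F_q^{2n}$ is $\Phi(d+ue)=(e,d+e)$ for $d,e\in\mathbb F_q^n$; the Lee weight is $wt_L(x)=wt_H(\Phi(x))$. A code over $R$ has parameters $(n,K,D)$ if it has length $n$, cardinality $K$ and minimum nonzero Lee weight $D$. A $t$-weight code has exactly $t$ distinct nonzero weights. 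*)

From HB Require Import structures.
From mathcomp Require Import all_boot all_order all_algebra.
Set Implicit Arguments. Unset Strict Implicit. Unset Printing Implicit Defensive.
Import Order.TTheory GRing.Theory.
Local Open Scope ring_scope.

Section Codes.
Variables (F : finFieldType) (m : nat).

Definition vec := 'rV[F]_m.

Definition dot (x y : vec) : F := \sum_(i < m) x ord0 i * y ord0 i.

Definition supp (v : vec) : {set 'I_m} := [set i | v ord0 i != 0].

Definition Delta (P : {set 'I_m}) : {set vec} := [set v | supp v \subset P].
Definition DeltaC (P : {set 'I_m}) : {set vec} := ~: Delta P.

(* R = F[u]/<u^2>: the pair (a, b) stands for a + u b. *)
Definition Rel := (F * F)%type.
Definition Radd (x y : Rel) : Rel := (x.1 + y.1, x.2 + y.2).
Definition Rmul (x y : Rel) : Rel := (x.1 * y.1, x.1 * y.2 + x.2 * y.1).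
Definition R0 : Rel := (0, 0).

(* element of the module calR^m = (R x F_q)^m : ((d, e), f) stands for (d + u e, f) *)
Definition Tm := ((vec * vec) * vec)%type.

(* <(d1+u e1, f1), (d2+u e2, f2)> = (d1+u e1).(d2+u e2) + u f1.f2 *)
Definition ip (r s : Tm) : Rel :=
  (dot r.1.1 s.1.1,
   dot r.1.1 s.1.2 + dot r.1.2 s.1.1 + dot r.2 s.2).

(* codewords of C_D, indexed by the elements of D (coordinates outside D are 0) *)
Definition codeword (D : {set Tm}) (r : Tm) : {ffun Tm -> Rel} :=
  [ffun s => if s \in D then ip r s else R0].

Definition code (D : {set Tm}) : {set {ffun Tm -> Rel}} :=
  [set codeword D r | r : Tm].

Definition zero_word : {ffun Tm -> Rel} := [ffun _ => R0].

(* Lee weight of a + u b is wt_H(b, a + b) (Gray map) *)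
Definition lee_el (x : Rel) : nat :=
  addn (x.2 != 0) (x.1 + x.2 != 0).

Definition lee_weight (D : {set Tm}) (c : {ffun Tm -> Rel}) : nat :=
  (\sum_(s in D) lee_el (c s))%N.

Definition is_R_linear (D : {set Tm}) (K : {set {ffun Tm -> Rel}}) : Prop :=
  zero_word \in K /\
  (forall c1 c2, c1 \in K -> c2 \in K -> [ffun s => Radd (c1 s) (c2 s)] \in K) /\
  (forall (a : Rel) c, c \in K -> [ffun s => Rmul a (c s)] \in K).

Definition min_lee_weight (D : {set Tm}) (K : {set {ffun Tm -> Rel}}) (d : nat)
  : Prop :=
  (exists2 c, c \in K & (c != zero_word) /\ lee_weight D c = d) /\
  (forall c, c \in K -> c != zero_word -> (d <= lee_weight D c)%N).

Definition freq (D : {set Tm}) (K : {set {ffun Tm -> Rel}}) (w : nat) : nat :=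
  #|[set c in K | lee_weight D c == w]|.

Definition num_weights (D : {set Tm}) (K : {set {ffun Tm -> Rel}}) : nat :=
  size (undup [seq lee_weight D c | c <- enum K & c != zero_word]).

Definition S3 (A B C : {set 'I_m}) : {set Tm} :=
  [set s : Tm | [&& s.1.1 \in Delta A, s.1.2 \in DeltaC B & s.2 \in Delta C]].

End Codes.

(* Write the codeword of r = (d + u e, f) at s = (x + u y, z) as <r, s>.  Under
   the Gray map its two coordinates are the values at s of the F_q-linear forms
   e.x + d.y + f.z and (d + e).x + d.y + f.z, so its Lee weight is the number of
   points of S_3 where the first form is nonzero plus the same for the second.
   S_3 is stable under translation by W = Delta_A x Delta_B x Delta_C, so a form
   that does not vanish on W takes every value equally often on S_3 and is nonzero
   on a fraction (q - 1)/q of it.  A form that vanishes on W only sees y through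
   d.y and is nonzero on (q - 1) q^(m + |A| + |C| - 1) points of S_3, or none if
   d = 0.  Normalising e in Delta_A and f in Delta_C makes r |-> codeword
   injective, and the weight distribution reduces to counting the normalised r
   for which neither, one, or both forms vanish on W. *)

From HB Require Import structures.
From mathcomp Require Import all_boot all_order all_algebra ring zify.
Set Implicit Arguments. Unset Strict Implicit. Unset Printing Implicit Defensive.
Import GRing.Theory.
Local Open Scope ring_scope.

Section ShiftCounting.
Variables (F : finFieldType) (X : finType) (S : {set X}) (g : X -> F) (tau : F -> X -> X).
Hypotheses (tauS : forall t s, s \in S -> tau t s \in S)
           (g_tau : forall t s, s \in S -> g (tau t s) = g s + t)
           (tauK : forall t s, tau (- t) (tau t s) = s).

Lemma card_fibre_shift t : #|[set s in S | g s == t]| = #|[set s in S | g s == 0]|.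
Proof.
have -> : [set s in S | g s == t] = tau t @: [set s in S | g s == 0].
  apply/setP => s; rewrite inE; apply/andP/imsetP => [[sS /eqP gs]|[z]].
    exists (tau (- t) s); last by rewrite -{1}(opprK t) tauK.
    by rewrite inE tauS // g_tau // gs subrr eqxx.
  by rewrite inE => /andP[zS /eqP gz] ->; rewrite tauS // g_tau // gz add0r.
by rewrite card_imset //; apply: can_inj (tauK t).
Qed.

Lemma card_preim_shift (T : pred F) :
  #|[set s in S | T (g s)]| = (#|T| * #|[set s in S | g s == 0%R]|)%N.
Proof.
rewrite -sum1_card (partition_big g T) => [|s]; last by rewrite inE => /andP[].
rewrite -sum_nat_const; apply: eq_bigr => t Tt.
rewrite -(card_fibre_shift t) -sum1_card; apply: eq_bigl => s; rewrite !inE.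
by case: eqP => [->|]; rewrite ?Tt ?andbF ?andbT.
Qed.

Lemma card_nonzero_shift :
  (#|[set s in S | g s != 0%R]| * #|F| = (#|F| - 1) * #|S|)%N.
Proof.
have cardS : #|S| = (#|F| * #|[set s in S | g s == 0%R]|)%N.
  by rewrite -(card_preim_shift predT); apply: eq_card => s; rewrite !inE andbT.
rewrite (card_preim_shift (predC1 0)) cardC1 cardS.
by rewrite subn1 mulnAC mulnA.
Qed.

End ShiftCounting.

Lemma card_imset_setId (X Y : finType) (f : X -> Y) (S : {set X}) (P : pred Y) :
  {in S &, injective f} -> #|[set y in f @: S | P y]| = #|[set x in S | P (f x)]|.
Proof.
move=> f_inj; have -> : [set y in f @: S | P y] = f @: [set x in S | P (f x)].
  apply/setP => y; rewrite inE; apply/andP/imsetP => [[/imsetP[x xS ->] Px]|[x]].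
    by exists x; rewrite ?inE ?xS.
  by rewrite inE => /andP[xS Px] ->; rewrite imset_f.
by rewrite card_in_imset // => x y; rewrite !inE => /andP[xS _] /andP[yS _]; apply: f_inj.
Qed.

Lemma card_sum_setId (T : finType) (S : {set T}) (P : pred T) :
  #|[set s in S | P s]| = (\sum_(s in S) P s)%N.
Proof.
rewrite -sum1_card (eq_bigl (fun s => (s \in S) && P s)) => [|s]; last by rewrite inE.
by rewrite big_mkcondr; apply: eq_bigr => s _; case: (P s).
Qed.

Section Supports.
Variables (F : finFieldType) (m : nat).
Implicit Types (P Q : {set 'I_m}) (u v x y : 'rV[F]_m).

Lemma DeltaP P v : reflect (forall j, j \notin P -> v 0 j = 0) (v \in Delta F P).
Proof.
rewrite inE; apply: (iffP subsetP) => [sub j|v0 j].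
  by move=> jP; apply/eqP; apply: contraNT jP => vj; apply: sub; rewrite inE.
by rewrite inE; apply: contraR => /v0 ->.
Qed.

Lemma notDeltaP P v : v \notin Delta F P -> exists2 i, i \notin P & v 0 i != 0.
Proof. by rewrite inE => /subsetPn[i]; rewrite inE => vi iP; exists i. Qed.

Lemma Delta0 P : 0 \in Delta F P.
Proof. by apply/DeltaP => j _; rewrite mxE. Qed.

Lemma DeltaD P u v : u \in Delta F P -> v \in Delta F P -> u + v \in Delta F P.
Proof. by move=> /DeltaP u0 /DeltaP v0; apply/DeltaP => j jP; rewrite mxE u0 ?v0 ?addr0. Qed.

Lemma DeltaZ P c v : v \in Delta F P -> c *: v \in Delta F P.
Proof. by move=> /DeltaP v0; apply/DeltaP => j jP; rewrite mxE v0 ?mulr0. Qed.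

Lemma DeltaB P u v : u \in Delta F P -> v \in Delta F P -> u - v \in Delta F P.
Proof. by move=> uP vP; rewrite -scaleN1r DeltaD ?DeltaZ. Qed.

Lemma DeltaCD P u v : u \in DeltaC F P -> v \in Delta F P -> u + v \in DeltaC F P.
Proof. by rewrite !in_setC => uP vP; apply: contra uP => uvP; rewrite -(addrK v u) DeltaB. Qed.

Lemma delta_mx_Delta P i : i \in P -> delta_mx 0 i \in Delta F P.
Proof.
move=> iP; apply/DeltaP => j jP; rewrite mxE eqxx /=.
by case: eqP => // ji; rewrite ji iP in jP.
Qed.

Lemma delta_mx_DeltaC P i : i \notin P -> delta_mx 0 i \in DeltaC F P.
Proof.
move=> iP; rewrite in_setC; apply/DeltaP => /(_ i iP)/eqP.
by rewrite mxE !eqxx oner_eq0.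
Qed.

Lemma DeltaI P Q : Delta F P :&: Delta F Q = Delta F (P :&: Q).
Proof. by apply/setP => v; rewrite !inE subsetI. Qed.

Lemma Delta_setCU P Q : Delta F (~: (P :|: Q)) = Delta F (~: P) :&: Delta F (~: Q).
Proof. by rewrite setCU DeltaI. Qed.

Lemma Delta_set0 : Delta F set0 = [set 0 : 'rV[F]_m].
Proof.
apply/setP => v; rewrite in_set1; apply/DeltaP/eqP => [v0|-> j _]; last by rewrite mxE.
by apply/rowP => j; rewrite v0 ?inE ?mxE.
Qed.

Lemma Delta_setC_eq0 P v : v \in Delta F P -> (v \in Delta F (~: P)) = (v == 0).
Proof. by move=> vP; rewrite -in_set1 -Delta_set0 -(setICr P) -DeltaI in_setI vP. Qed.

Lemma card_Delta P : #|Delta F P| = (#|F| ^ #|P|)%N.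
Proof.
pose row_of (f : {ffun 'I_m -> F}) : 'rV[F]_m := \row_j f j.
have -> : Delta F P = row_of @: pffun_on 0 P predT.
  apply/setP => v; apply/DeltaP/imsetP => [v0|[f /pffun_onP[/subsetP fP _] -> j jP]].
    exists [ffun j => v 0 j]; last by apply/rowP => j; rewrite !mxE ffunE.
    apply/pffun_onP; split=> //; apply/subsetP => j; rewrite inE ffunE.
    by apply: contraR => /v0 ->.
  by rewrite mxE; apply/eqP; apply: contraR jP => /fP.
rewrite card_in_imset ?card_pffun_on // => f g _ _ /rowP fg.
by apply/ffunP => j; have := fg j; rewrite !mxE.
Qed.

Lemma card_DeltaC P : #|DeltaC F P| = (#|F| ^ m - #|F| ^ #|P|)%N.
Proof. by rewrite /DeltaC cardsCs setCK card_Delta card_mx mul1n. Qed.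

Lemma card_Delta_setC P : #|Delta F (~: P)| = (#|F| ^ (m - #|P|))%N.
Proof. by rewrite card_Delta cardsCs setCK card_ord. Qed.

Lemma dotDl x y z : dot (x + y) z = dot x z + dot y z.
Proof. by rewrite /dot -big_split; apply: eq_bigr => i _; rewrite mxE mulrDl. Qed.

Lemma dotDr x y z : dot x (y + z) = dot x y + dot x z.
Proof. by rewrite /dot -big_split; apply: eq_bigr => i _; rewrite mxE mulrDr. Qed.

Lemma dotZl c x y : dot (c *: x) y = c * dot x y.
Proof. by rewrite /dot mulr_sumr; apply: eq_bigr => i _; rewrite mxE mulrA. Qed.

Lemma dotZr c x y : dot x (c *: y) = c * dot x y.
Proof. by rewrite /dot mulr_sumr; apply: eq_bigr => i _; rewrite mxE mulrCA. Qed.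

Lemma dotNl x y : dot (- x) y = - dot x y.
Proof. by rewrite -scaleN1r dotZl mulN1r. Qed.

Lemma dot0l y : dot 0 y = 0.
Proof. by rewrite -(scale0r 0) dotZl mul0r. Qed.

Lemma dot0r x : dot x 0 = 0.
Proof. by rewrite -(scale0r 0) dotZr mul0r. Qed.

Lemma dot_delta_mx x i : dot x (delta_mx 0 i) = x 0 i.
Proof.
rewrite /dot (bigD1 i) //= big1 ?addr0 => [|j ji]; first by rewrite mxE !eqxx mulr1.
by rewrite mxE eqxx (negbTE ji) mulr0.
Qed.

Lemma dot_Delta_setC P x v : x \in Delta F (~: P) -> v \in Delta F P -> dot x v = 0.
Proof.
move=> /DeltaP x0 /DeltaP v0; rewrite /dot big1 // => i _.
case: (boolP (i \in P)) => iP; last by rewrite v0 ?mulr0.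
by rewrite x0 ?mul0r // inE iP.
Qed.

Definition proj P x : 'rV[F]_m := \row_j (if j \in P then x 0 j else 0).

Lemma proj_Delta P x : proj P x \in Delta F P.
Proof. by apply/DeltaP => j jP; rewrite mxE (negbTE jP). Qed.

Lemma dot_proj P x v : v \in Delta F P -> dot (proj P x) v = dot x v.
Proof.
move=> /DeltaP v0; apply: eq_bigr => i _; rewrite mxE.
by case: ifP => // /negbT /v0 ->; rewrite !mulr0.
Qed.

Lemma proj_eq0 P x : (proj P x == 0) = (x \in Delta F (~: P)).
Proof.
apply/eqP/DeltaP => [x0 j|x0]; last first.
  by apply/rowP => j; rewrite !mxE; case: ifP => // jP; rewrite x0 ?inE ?jP.
by rewrite inE negbK => jP; have /rowP/(_ j) := x0; rewrite !mxE jP.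
Qed.

Lemma addr_Delta_setC P x e :
  e \in Delta F P -> (x + e \in Delta F (~: P)) = (e == - proj P x).
Proof.
move=> /DeltaP e0; apply/DeltaP/eqP => [xe0|-> j]; last first.
  by rewrite inE negbK !mxE => ->; rewrite subrr.
apply/rowP => j; rewrite !mxE; case: ifP => jP; last by rewrite e0 ?jP ?oppr0.
have := xe0 j; rewrite inE jP mxE => /(_ isT)/eqP.
by rewrite addrC addr_eq0 => /eqP.
Qed.

Lemma card_dot_neq0 x : x != 0 ->
  (#|[set y | dot x y != 0%R]| * #|F| = (#|F| - 1) * #|F| ^ m)%N.
Proof.
move=> x0; have [i _ xi] : exists2 i, i \notin set0 & x 0 i != 0.
  by apply: notDeltaP; rewrite Delta_set0 in_set1.
rewrite (eq_card (B := [set y in setT | dot x y != 0])) => [|y]; last by rewrite !inE.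
rewrite (card_nonzero_shift (tau := fun t y => y + (t / x 0 i) *: delta_mx 0 i)).
- by rewrite cardsT card_mx mul1n.
- by move=> t y; rewrite inE.
- by move=> t y _; rewrite dotDr dotZr dot_delta_mx divfK.
- by move=> t y; rewrite mulNr scaleNr addrK.
Qed.

End Supports.

Section Weights.
Variables (F : finFieldType) (m : nat) (D : {set Tm F m}) (K : {set {ffun Tm F m -> Rel F}}).

Lemma lee_el_eq0 (x : Rel F) : (lee_el x == 0%N) = (x == R0 F).
Proof.
case: x => a b; rewrite /lee_el /R0 addn_eq0 !eqb0 !negbK xpair_eqE andbC.
by case: (eqVneq b 0) => [->|]; rewrite ?addr0 ?andbF.
Qed.

Lemma lee_weight_eq0 (c : {ffun Tm F m -> Rel F}) : {in ~: D, forall s, c s = R0 F} ->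
  (lee_weight D c == 0%N) = (c == zero_word F m).
Proof.
move=> c_out; rewrite /lee_weight sum_nat_eq0; apply/forall_inP/eqP => [c0|-> s _].
  apply/ffunP => s; rewrite ffunE; case: (boolP (s \in D)) => sD.
    by apply/eqP; rewrite -lee_el_eq0 c0.
  by rewrite c_out ?inE.
by rewrite ffunE lee_el_eq0.
Qed.

Variable ws : seq nat.
Hypotheses (ws_uniq : uniq (0%N :: ws))
  (K_wt0 : {in K, forall c, (lee_weight D c == 0%N) = (c == zero_word F m)})
  (K_wt : {in K, forall c, lee_weight D c \in 0%N :: ws}).

Lemma lee_weight_neq0 c : c \in K -> c != zero_word F m -> lee_weight D c \in ws.
Proof. by move=> cK c0; have := K_wt cK; rewrite in_cons K_wt0 // (negbTE c0). Qed.

Lemma num_weightsE : num_weights D K = count (fun w => 0 < freq D K w)%N ws.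
Proof.
case/andP: ws_uniq => ws0 ws_uniq'; rewrite /num_weights -size_filter.
apply/perm_size/uniq_perm; [exact: undup_uniq | exact: filter_uniq ws_uniq' | move=> w].
rewrite mem_undup mem_filter; apply/mapP/andP => [[c]|[/card_gt0P[c cw] wws]].
  rewrite mem_filter mem_enum => /andP[c0 cK] ->; split; last exact: lee_weight_neq0.
  by apply/card_gt0P; exists c; rewrite inE cK eqxx.
move: cw; rewrite inE => /andP[cK /eqP wc]; exists c => //.
rewrite mem_filter mem_enum cK andbT -(K_wt0 cK) wc.
by apply: contraNneq ws0 => <-.
Qed.

Lemma min_lee_weightP w :
  all (leq w) ws -> w != 0%N -> (0 < freq D K w)%N -> min_lee_weight D K w.
Proof.
move=> w_min w0 /card_gt0P[c]; rewrite inE => /andP[cK /eqP wc]; split.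
  by exists c => //; rewrite -(K_wt0 cK) wc.
by move=> c' c'K c'0; apply: (allP w_min); apply: lee_weight_neq0.
Qed.

Lemma card_eq_sum_freq : #|K| = (\sum_(w <- 0%N :: ws) freq D K w)%N.
Proof.
rewrite -sum1_card.
under [RHS]eq_bigr do rewrite /freq card_sum_setId.
rewrite exchange_big; apply: eq_bigr => c cK.
rewrite -big_mkcond sum1_count (eq_count (a2 := pred1 (lee_weight D c))) => [|w].
  by rewrite count_uniq_mem // K_wt.
exact: eq_sym.
Qed.

End Weights.

Lemma code_R_linear (F : finFieldType) (m : nat) (D : {set Tm F m}) : is_R_linear D (code D).
Proof.
have cw0 : codeword D ((0, 0), 0) = zero_word F m.
  by apply/ffunP => s; rewrite !ffunE /ip /= !dot0l !addr0; case: ifP.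
split; first by rewrite -cw0 imset_f.
split.
  move=> c1 c2 /imsetP[r1 _ ->] /imsetP[r2 _ ->].
  apply/imsetP; exists (r1 + r2) => //; apply/ffunP => s; rewrite !ffunE.
  case: ifP => _; last by rewrite /Radd /R0 /= addr0.
  by rewrite /ip /Radd /= !dotDl; congr (_, _); ring.
move=> [a b] c /imsetP[r _ ->].
apply/imsetP; exists (a *: r + (0, b *: r.1.1, 0)) => //; apply/ffunP => s; rewrite !ffunE.
case: ifP => _; last by rewrite /Rmul /R0 /= !mulr0 addr0.
by rewrite /ip /Rmul /= !dotDl !dotZl !dot0l; congr (_, _); ring.
Qed.

Section Code.
Variables (F : finFieldType) (m : nat) (A B C : {set 'I_m}).
Local Notation vec := 'rV[F]_m.
Local Notation q := #|F|.
Local Notation D := (S3 F A B C).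
Implicit Types (al de ga : vec) (r s v : Tm F m).

Definition form al de ga s : F := dot al s.1.1 + dot de s.1.2 + dot ga s.2.

Lemma formD al de ga s v : form al de ga (s + v) = form al de ga s + form al de ga v.
Proof. by rewrite /form /= !dotDr; ring. Qed.

Lemma formZ al de ga t v : form al de ga (t *: v) = t * form al de ga v.
Proof. by rewrite /form /= !dotZr !mulrDr. Qed.

Lemma formB al de ga al' de' ga' s :
  form al de ga s - form al' de' ga' s = form (al - al') (de - de') (ga - ga') s.
Proof. by rewrite /form !dotDl !dotNl; ring. Qed.

Definition form_supp al de ga : {set Tm F m} := [set s in D | form al de ga s != 0].

Definition blocks : {set Tm F m} := setX (setX (Delta F A) (Delta F B)) (Delta F C).

Lemma S3E : D = setX (setX (Delta F A) (DeltaC F B)) (Delta F C).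
Proof. by apply/setP => [[[x y] z]]; rewrite inE !in_setX andbA. Qed.

Lemma S3_shift s v : s \in D -> v \in blocks -> s + v \in D.
Proof.
case: s v => [[x y] z] [[x' y'] z']; rewrite S3E => /setXP[/setXP[xA yB] zC] /setXP[/setXP[vA vB] vC].
by rewrite !in_setX /= !DeltaD ?DeltaCD.
Qed.

Lemma blocksZ t v : v \in blocks -> t *: v \in blocks.
Proof. by case: v => [[x y] z] /setXP[/setXP[xA yB] zC]; rewrite !in_setX /= !DeltaZ. Qed.

(* [ortho al de ga] says that [form al de ga] vanishes on [blocks]. *)
Definition ortho al de ga :=
  [&& al \in Delta F (~: A), de \in Delta F (~: B) & ga \in Delta F (~: C)].

Lemma form_blocks_neq0 al de ga :
  ~~ ortho al de ga -> exists2 v, v \in blocks & form al de ga v != 0.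
Proof.
rewrite !negb_and => /or3P[] /notDeltaP[i]; rewrite inE negbK => iP nz.
- exists ((delta_mx 0 i, 0), 0); first by rewrite !in_setX /= delta_mx_Delta ?Delta0.
  by rewrite /form /= dot_delta_mx !dot0r !addr0.
- exists ((0, delta_mx 0 i), 0); first by rewrite !in_setX /= delta_mx_Delta ?Delta0.
  by rewrite /form /= dot_delta_mx !dot0r addr0 add0r.
- exists ((0, 0), delta_mx 0 i); first by rewrite !in_setX /= delta_mx_Delta ?Delta0.
  by rewrite /form /= dot_delta_mx !dot0r !add0r.
Qed.

Lemma card_form_neq0_generic al de ga : ~~ ortho al de ga ->
  (#|form_supp al de ga| * q = (q - 1) * #|D|)%N.
Proof.
case/form_blocks_neq0 => v vB v0.
apply: (card_nonzero_shift (tau := fun t s => s + (t / form al de ga v) *: v)) => t s.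
- by move=> sD; rewrite S3_shift ?blocksZ.
- by move=> _; rewrite formD formZ divfK.
- by rewrite mulNr scaleNr addrK.
Qed.

Lemma S3_form_neq0_ortho al de ga : ortho al de ga ->
  form_supp al de ga =
  setX (setX (Delta F A) [set y | dot de y != 0]) (Delta F C).
Proof.
case/and3P => alA deB gaC; apply/setP => [[[x y] z]].
rewrite inE S3E !in_setX /= /form.
case xA: (x \in Delta F A) => //=; case zC: (z \in Delta F C); rewrite ?andbF //=.
rewrite (dot_Delta_setC alA xA) (dot_Delta_setC gaC zC) add0r addr0.
rewrite [in RHS]inE !andbT /DeltaC in_setC.
case yB: (y \in Delta F B) => //=.
by rewrite (dot_Delta_setC deB yB) eqxx.
Qed.

Lemma card_S3 : #|D| = (q ^ #|A| * (q ^ m - q ^ #|B|) * q ^ #|C|)%N.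
Proof. by rewrite S3E !cardsX !card_Delta card_DeltaC. Qed.

Hypothesis A0 : A != set0.

Definition n_generic := ((q - 1) * q ^ (#|A| + #|C| - 1) * (q ^ m - q ^ #|B|))%N.
Definition n_ortho := ((q - 1) * q ^ (m + #|A| + #|C| - 1))%N.

Lemma card_form_supp al de ga : #|form_supp al de ga| =
  if ortho al de ga then (if de == 0 then 0%N else n_ortho) else n_generic.
Proof.
have q_gt0 : (0 < q)%N := ltnW (card_finNzRing_gt1 F).
have expS k : (q ^ (k + #|A| + #|C| - 1) * q = q ^ k * q ^ #|A| * q ^ #|C|)%N.
  have a_gt0 : (0 < #|A|)%N by rewrite card_gt0.
  by rewrite -expnSr -!expnD; congr (_ ^ _)%N; lia.
apply/eqP; rewrite -(eqn_pmul2r q_gt0); apply/eqP.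
case: ifP => [orth|/negbT northo].
  rewrite S3_form_neq0_ortho // !cardsX !card_Delta.
  case: eqP => [->|/eqP de0].
    rewrite (_ : [set y | dot 0 y != 0] = set0) ?cards0 ?muln0 ?mul0n //.
    by apply/setP => y; rewrite !inE dot0l eqxx.
  rewrite /n_ortho -[in RHS]mulnA expS.
  transitivity (q ^ #|A| * q ^ #|C| * (#|[set y | dot de y != 0%R]| * q))%N; first by ring.
  by rewrite card_dot_neq0 //; ring.
rewrite card_form_neq0_generic // card_S3 /n_generic.
transitivity ((q - 1) * (q ^ (0 + #|A| + #|C| - 1) * q) * (q ^ m - q ^ #|B|))%N.
  by rewrite expS expn0 mul1n; ring.
by rewrite add0n; ring.
Qed.

Lemma ipE r s : ip r s = (dot r.1.1 s.1.1, form r.1.2 r.1.1 r.2 s).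
Proof. by rewrite /ip /form [dot r.1.1 _ + _]addrC. Qed.

Lemma lee_weight_codeword r : lee_weight D (codeword D r) =
  (#|form_supp r.1.2 r.1.1 r.2| + #|form_supp (r.1.1 + r.1.2) r.1.1 r.2|)%N.
Proof.
rewrite !card_sum_setId -big_split; apply: eq_bigr => s sD.
rewrite ffunE sD ipE /lee_el /form /= dotDl.
by congr (_ + _)%N; congr (~~ (_ == _)); ring.
Qed.

Hypothesis B_lt_m : (#|B| < m)%N.

Lemma form_eq0_S3 al de ga :
  {in D, forall s, form al de ga s = 0} -> ortho al de ga /\ de = 0.
Proof.
move=> form0.
have sD i : i \notin B -> ((0, delta_mx 0 i), 0) \in D.
  by move=> iB; rewrite S3E !in_setX /= !Delta0 delta_mx_DeltaC.
have form_sD i : i \notin B -> de 0 i = 0.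
  by move=> /sD/form0; rewrite /form /= dot_delta_mx !dot0r addr0 add0r.
have orth : ortho al de ga.
  have [j jB] : exists j, j \notin B.
    have : (0 < #|~: B|)%N by rewrite cardsCs setCK card_ord subn_gt0.
    by case/card_gt0P => j; rewrite inE; exists j.
  apply: contraT => /form_blocks_neq0[v vB].
  by have := form0 _ (S3_shift (sD j jB) vB); rewrite formD form0 ?sD // add0r => ->; rewrite eqxx.
split=> //; apply/rowP => i; rewrite mxE.
case: (boolP (i \in B)) => iB; last exact: form_sD.
by case/and3P: orth => _ /DeltaP de0 _; rewrite de0 // inE negbK.
Qed.

Definition reps : {set Tm F m} := setX (setX [set: vec] (Delta F A)) (Delta F C).

Lemma codeword_proj r : codeword D r = codeword D ((r.1.1, proj A r.1.2), proj C r.2).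
Proof.
apply/ffunP => [[[x y] z]]; rewrite !ffunE; case: ifP => //.
by rewrite S3E => /setXP[/setXP[xA _] zC]; rewrite /ip /= !dot_proj.
Qed.

Lemma code_reps : code D = codeword D @: reps.
Proof.
apply/setP => c; apply/imsetP/imsetP => [[r _ ->]|[r _ ->]]; last by exists r.
exists ((r.1.1, proj A r.1.2), proj C r.2); last exact: codeword_proj.
by rewrite !in_setX in_setT !proj_Delta.
Qed.

Lemma codeword_inj : {in reps &, injective (codeword D)}.
Proof.
move=> [[d e] f] [[d' e'] f'] /setXP[/setXP[_ eA] fC] /setXP[/setXP[_ e'A] f'C] eqc.
have [/and3P[ee' _ ff'] dd'] : ortho (e - e') (d - d') (f - f') /\ d - d' = 0.
  apply: form_eq0_S3 => s sD; rewrite -formB.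
  have := congr1 (fun c : {ffun Tm F m -> Rel F} => (c s).2) eqc.
  by rewrite /= !ffunE sD !ipE /= => ->; rewrite subrr.
have eq_Delta (P : {set 'I_m}) (u u' : vec) :
  u \in Delta F P -> u' \in Delta F P -> u - u' \in Delta F (~: P) -> u = u'.
  by move=> uP u'P; rewrite Delta_setC_eq0 ?DeltaB // subr_eq0 => /eqP.
move/eqP: dd'; rewrite subr_eq0 => /eqP->.
by rewrite (eq_Delta _ _ _ eA e'A ee') (eq_Delta _ _ _ fC f'C ff').
Qed.

Lemma n_generic_gt0 : (0 < n_generic)%N.
Proof.
have q_gt1 := card_finNzRing_gt1 F.
by rewrite !muln_gt0 subn_gt0 q_gt1 expn_gt0 (ltnW q_gt1) subn_gt0 ltn_exp2l.
Qed.

Lemma n_generic_lt_ortho : (n_generic < n_ortho)%N.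
Proof.
have q_gt1 := card_finNzRing_gt1 F; have a_gt0 : (0 < #|A|)%N by rewrite card_gt0.
rewrite /n_generic /n_ortho.
have -> : (q ^ (m + #|A| + #|C| - 1) = q ^ (#|A| + #|C| - 1) * q ^ m)%N.
  by rewrite -expnD; congr (_ ^ _)%N; lia.
rewrite -mulnA ltn_pmul2l ?subn_gt0 // ltn_pmul2l ?expn_gt0 ?(ltnW q_gt1) //.
by rewrite ltn_subrL !expn_gt0 (ltnW q_gt1).
Qed.

Lemma n_generic_add_ortho : (n_generic + n_ortho =
  (q - 1) * q ^ (#|A| + #|C| - 1) * (2 * q ^ m - q ^ #|B|))%N.
Proof.
have q_gt1 := card_finNzRing_gt1 F; have a_gt0 : (0 < #|A|)%N by rewrite card_gt0.
have B_le : (q ^ #|B| <= q ^ m)%N by rewrite leq_exp2l // ltnW.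
rewrite /n_generic /n_ortho.
have -> : (2 * q ^ m - q ^ #|B| = (q ^ m - q ^ #|B|) + q ^ m)%N by lia.
have -> : (q ^ (m + #|A| + #|C| - 1) = q ^ (#|A| + #|C| - 1) * q ^ m)%N.
  by rewrite -expnD; congr (_ ^ _)%N; lia.
ring.
Qed.

(* Whether the forms giving the two Gray coordinates of [codeword D r] (see
   [lee_weight_codeword]) vanish on [blocks]. *)
Definition ortho1 r := ortho r.1.2 r.1.1 r.2.
Definition ortho2 r := ortho (r.1.1 + r.1.2) r.1.1 r.2.

Local Notation wt r := (lee_weight D (codeword D r)).

Lemma lee_weight_cases r :
  [/\ (wt r == 0)%N = (r.1.1 == 0) && ortho1 r,
      (wt r == n_generic + n_generic)%N = ~~ ortho1 r && ~~ ortho2 r,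
      (wt r == n_generic + n_ortho)%N = (r.1.1 != 0) && (ortho1 r != ortho2 r) &
      (wt r == n_ortho + n_ortho)%N = (r.1.1 != 0) && ortho1 r && ortho2 r].
Proof.
move: n_generic_gt0 n_generic_lt_ortho.
rewrite lee_weight_codeword !card_form_supp -/(ortho1 r) -/(ortho2 r).
move: n_generic n_ortho => g o g_gt0 g_lt_o.
case: (eqVneq r.1.1 0) => [d0|_] /=.
  have -> : ortho2 r = ortho1 r by rewrite /ortho2 /ortho1 d0 add0r.
  by case: (ortho1 r) => /=; split; case: eqP => //=; lia.
by case: (ortho1 r); case: (ortho2 r) => /=; split; case: eqP => //=; lia.
Qed.

Lemma ortho1_reps r : r \in reps ->
  ortho1 r = [&& r.1.2 == 0, r.1.1 \in Delta F (~: B) & r.2 == 0].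
Proof.
case: r => [[d e] f] /setXP[/setXP[_ eA] fC].
by rewrite /ortho1 /ortho /= (Delta_setC_eq0 eA) (Delta_setC_eq0 fC).
Qed.

Lemma ortho2_reps r : r \in reps ->
  ortho2 r = [&& r.1.2 == - proj A r.1.1, r.1.1 \in Delta F (~: B) & r.2 == 0].
Proof.
case: r => [[d e] f] /setXP[/setXP[_ eA] fC].
by rewrite /ortho2 /ortho /= (addr_Delta_setC _ eA) (Delta_setC_eq0 fC).
Qed.

Lemma reps0 : ((0, 0), 0) \in reps.
Proof. by rewrite !in_setX in_setT !Delta0. Qed.

Lemma card_reps_zero : #|[set r in reps | (r.1.1 == 0) && ortho1 r]| = 1%N.
Proof.
suff -> : [set r in reps | (r.1.1 == 0) && ortho1 r] = [set ((0, 0), 0)] by rewrite cards1.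
apply/setP => r; rewrite inE in_set1; apply/andP/eqP => [[rR]|->]; last first.
  by rewrite reps0 ortho1_reps ?reps0 //= eqxx Delta0.
by rewrite ortho1_reps //; case: r {rR} => [[d e] f] /= /and4P[/eqP-> /eqP-> _ /eqP->].
Qed.

Lemma card_reps_ortho :
  #|[set r in reps | (r.1.1 != 0) && ortho1 r && ortho2 r]| = (q ^ (m - #|A :|: B|) - 1)%N.
Proof.
have -> : [set r in reps | (r.1.1 != 0) && ortho1 r && ortho2 r] =
          (fun d : vec => ((d, 0 : vec), 0 : vec)) @: (Delta F (~: (A :|: B)) :\ 0).
  apply/setP => r; rewrite inE; apply/andP/imsetP => [[rR]|[d]].
    rewrite ortho1_reps // ortho2_reps //; case: r rR => [[d e] f] _ /=.
    case/and4P=> /and4P[d0 /eqP-> dB /eqP->]; rewrite eq_sym oppr_eq0 proj_eq0 => dA _ _.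
    by exists d; rewrite // in_setD1 d0 Delta_setCU in_setI dA.
  rewrite in_setD1 Delta_setCU in_setI => /and3P[d0 dA dB] ->.
  have dR : ((d, 0 : vec), 0 : vec) \in reps by rewrite !in_setX in_setT !Delta0.
  rewrite dR ortho1_reps // ortho2_reps //=.
  by rewrite d0 dB eqxx eq_sym oppr_eq0 proj_eq0 dA.
rewrite card_in_imset => [|d d' _ _ [] //].
by rewrite -card_Delta_setC (cardsD1 0 (Delta F _)) Delta0 add1n subn1.
Qed.

Lemma card_reps_mixed :
  #|[set r in reps | (r.1.1 != 0) && (ortho1 r != ortho2 r)]| =
  (2 * (q ^ (m - #|B|) - q ^ (m - #|A :|: B|)))%N.
Proof.
pose mixed (p : bool * vec) : Tm F m := ((p.2, if p.1 then - proj A p.2 else 0), 0).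
pose X := Delta F (~: B) :\: Delta F (~: A).
have projX x : x \in X -> proj A x != 0 by rewrite in_setD proj_eq0 => /andP[].
have -> : [set r in reps | (r.1.1 != 0) && (ortho1 r != ortho2 r)] =
          mixed @: setX [set: bool] X.
  apply/setP => -[[d e] f]; rewrite inE; apply/andP/imsetP => [[rR]|[[b x]]].
    rewrite ortho1_reps // ortho2_reps //= => /andP[d0].
    have [dB|] := boolP (d \in Delta F (~: B)); last by rewrite !andbF eqxx.
    have [f0|] := eqVneq f 0; last by rewrite !andbF eqxx.
    rewrite !andbT => e_mixed; exists (e != 0, d).
      rewrite in_setX in_setT in_setD dB andbT -proj_eq0 /=.
      by apply: contraNneq e_mixed => ->; rewrite oppr0.
    rewrite f0 /mixed /=; case: (eqVneq e 0) e_mixed => [->|_] //=.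
    by case: (e =P - proj A d) => [->|].
  rewrite in_setX in_setT /= => xX [-> -> ->].
  have x0 : x != 0 by apply: contraTneq xX => ->; rewrite in_setD Delta0.
  have xR : mixed (b, x) \in reps.
    by rewrite !in_setX in_setT Delta0 andbT; case: b; rewrite ?Delta0 // -scaleN1r DeltaZ ?proj_Delta.
  split=> //; rewrite ortho1_reps // ortho2_reps //= x0.
  have p0 := negbTE (projX x xX).
  move: xX; rewrite in_setD => /andP[_ ->]; rewrite eqxx !andbT.
  by case: b {xR}; rewrite eqxx ?[0 == _]eq_sym oppr_eq0 p0.
rewrite card_in_imset ?cardsX ?cardsT ?card_bool.
  by rewrite cardsD -Delta_setCU setUC !card_Delta_setC.
move=> [b x] [b' x'] /setXP[_ xX] _ [<-]; rewrite /mixed /=.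
have p0 := negbTE (projX x xX).
by case: b; case: b' => // /eqP; rewrite ?[0 == _]eq_sym oppr_eq0 p0.
Qed.

Lemma card_code : #|code D| = (q ^ (m + #|A| + #|C|))%N.
Proof.
rewrite code_reps card_in_imset; last exact: codeword_inj.
by rewrite !cardsX cardsT card_mx mul1n !card_Delta -!expnD.
Qed.

Lemma freq_reps w : freq D (code D) w = #|[set r in reps | wt r == w]|.
Proof. by rewrite /freq code_reps card_imset_setId //; apply: codeword_inj. Qed.

Lemma code_lee_weight_eq0 c : c \in code D -> (lee_weight D c == 0%N) = (c == zero_word F m).
Proof.
case/imsetP => r _ ->; apply: lee_weight_eq0 => s.
by rewrite inE ffunE => /negbTE->.
Qed.

Local Notation weights := [:: n_generic + n_generic; n_generic + n_ortho; n_ortho + n_ortho]%N.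

Lemma code_lee_weight c : c \in code D -> lee_weight D c \in 0%N :: weights.
Proof.
rewrite code_reps => /imsetP[r _ ->]; rewrite !inE.
case: (lee_weight_cases r) => -> -> -> ->.
case: (eqVneq r.1.1 0) => [d0|_] /=; last by case: (ortho1 r); case: (ortho2 r).
have -> : ortho2 r = ortho1 r by rewrite /ortho2 /ortho1 d0 add0r.
by case: (ortho1 r).
Qed.

Lemma freq_zero : freq D (code D) 0 = 1%N.
Proof.
rewrite freq_reps -[RHS]card_reps_zero; apply: eq_card => r; rewrite !inE.
by case: (lee_weight_cases r) => ->.
Qed.

Lemma freq_mixed : freq D (code D) (n_generic + n_ortho)%N =
  (2 * (q ^ (m - #|B|) - q ^ (m - #|A :|: B|)))%N.
Proof.
rewrite freq_reps -card_reps_mixed; apply: eq_card => r; rewrite !inE.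
by case: (lee_weight_cases r) => _ _ ->.
Qed.

Lemma freq_ortho : freq D (code D) (n_ortho + n_ortho)%N = (q ^ (m - #|A :|: B|) - 1)%N.
Proof.
rewrite freq_reps -card_reps_ortho; apply: eq_card => r; rewrite !inE.
by case: (lee_weight_cases r) => _ _ _ ->.
Qed.

Lemma weights_uniq : uniq (0%N :: weights).
Proof.
have := n_generic_gt0; have := n_generic_lt_ortho.
move: n_generic n_ortho => g o g_lt_o g_gt0.
rewrite /= !inE !negb_or; apply/and4P; split; try apply/and3P; try split; apply/eqP; lia.
Qed.

Lemma card_code_freq : (q ^ (m + #|A| + #|C|) =
  1 + freq D (code D) (n_generic + n_generic) +
  2 * (q ^ (m - #|B|) - q ^ (m - #|A :|: B|)) + (q ^ (m - #|A :|: B|) - 1))%N.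
Proof.
rewrite -card_code (card_eq_sum_freq weights_uniq code_lee_weight).
by rewrite !big_cons big_nil freq_zero freq_mixed freq_ortho addn0 !addnA.
Qed.

Lemma expn_AB_le_B : (q ^ (m - #|A :|: B|) <= q ^ (m - #|B|))%N.
Proof.
by rewrite leq_exp2l ?card_finNzRing_gt1 // leq_sub2l // subset_leq_card // subsetUr.
Qed.

Lemma expn_AB_gt0 : (0 < q ^ (m - #|A :|: B|))%N.
Proof. by rewrite expn_gt0 ltnW ?card_finNzRing_gt1. Qed.

Lemma freq_generic : Posz (freq D (code D) (n_generic + n_generic)%N) =
  ((q ^ (m + #|A| + #|C|))%:Z - 2 * (q ^ (m - #|B|))%:Z + (q ^ (m - #|A :|: B|))%:Z)%R.
Proof. by have := expn_AB_le_B; have := expn_AB_gt0; rewrite card_code_freq; lia. Qed.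

Lemma freq_generic_gt0 : (0 < freq D (code D) (n_generic + n_generic))%N.
Proof.
have q_gt1 := card_finNzRing_gt1 F; have a_gt0 : (0 < #|A|)%N by rewrite card_gt0.
have B_le : (q ^ (m - #|B|) <= q ^ m)%N by rewrite leq_exp2l ?leq_subr // ltnW.
have total_ge : (2 * q ^ m <= q ^ (m + #|A| + #|C|))%N.
  rewrite -addnA expnD mulnC leq_mul2l; apply/orP; right.
  apply: leq_trans (card_finNzRing_gt1 F) _; rewrite -{1}(expn1 q) leq_exp2l //.
  exact: leq_trans a_gt0 (leq_addr _ _).
rewrite card_code_freq in total_ge.
by have := expn_AB_le_B; have := expn_AB_gt0; lia.
Qed.

Lemma freq_mixed_gt0 : (0 < freq D (code D) (n_generic + n_ortho))%N = ~~ (A \subset B).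
Proof.
have AB : (A \subset B) = (#|B| == #|A :|: B|).
  by rewrite (subset_leqif_cards (subsetUr A B)).2 eq_sym; apply/setUidPr/eqP.
have := subset_leq_card (subsetT (A :|: B)); rewrite cardsT card_ord.
rewrite AB freq_mixed muln_gt0 /= subn_gt0 ltn_exp2l ?card_finNzRing_gt1 //.
have := subset_leq_card (subsetUr A B); case: eqP => /= ? ? ?; apply/idP/idP; lia.
Qed.

Lemma freq_ortho_gt0 : (0 < freq D (code D) (n_ortho + n_ortho))%N = (A :|: B != setT).
Proof.
have := (subset_leqif_cards (subsetT (A :|: B))).2; rewrite cardsT card_ord => <-.
have := subset_leq_card (subsetT (A :|: B)); rewrite cardsT card_ord.
rewrite freq_ortho subn_gt0 -{1}(expn0 q) ltn_exp2l ?card_finNzRing_gt1 //.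
case: eqP; lia.
Qed.

Lemma min_lee_weight_code : min_lee_weight D (code D) (n_generic + n_generic).
Proof.
apply: (min_lee_weightP code_lee_weight_eq0 code_lee_weight); last exact: freq_generic_gt0.
  by have := n_generic_lt_ortho; rewrite /= => lt_go; apply/and4P; split=> //; lia.
by rewrite addn_eq0 andbb -lt0n n_generic_gt0.
Qed.

Lemma num_weights_code :
  num_weights D (code D) = (1 + ~~ (A \subset B) + (A :|: B != setT))%N.
Proof.
rewrite (num_weightsE weights_uniq code_lee_weight_eq0 code_lee_weight) /=.
by rewrite freq_generic_gt0 freq_mixed_gt0 freq_ortho_gt0 addn0 addnA.
Qed.

End Code.

Local Close Scope ring_scope.

Theorem mainTheorem3 (F : finFieldType) (m : nat) (A B C : {set 'I_m}) :
  (2 <= m)%N -> A != set0 -> B != set0 -> C != set0 -> (#|B| < m)%N ->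
  let q := #|F| in
  let a := #|A| in let b := #|B| in let c := #|C| in let ab := #|A :|: B| in
  let D := @S3 F m A B C in
  let K := code D in
  let w1 := (2 * (q - 1) * q ^ (a + c - 1) * (q ^ m - q ^ b))%N in
  let w2 := ((q - 1) * q ^ (a + c - 1) * (2 * q ^ m - q ^ b))%N in
  let w3 := (2 * (q - 1) * q ^ (m + a + c - 1))%N in
  [/\ is_R_linear D K,
      #|D| = (q ^ (a + c) * (q ^ m - q ^ b))%N /\ #|K| = (q ^ (m + a + c))%N,
      min_lee_weight D K w1,
      [/\ freq D K 0 = 1%N,
          Posz (freq D K w1) =
            ((q ^ (m + a + c))%:Z - 2 * (q ^ (m - b))%:Z + (q ^ (m - ab))%:Z)%R,
          Posz (freq D K w2) = (2 * ((q ^ (m - b))%:Z - (q ^ (m - ab))%:Z))%R,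
          Posz (freq D K w3) = ((q ^ (m - ab))%:Z - 1)%R &
          (forall cw, cw \in K ->
             lee_weight D cw \in [:: 0%N; w1; w2; w3])] &
      ((A :|: B == setT) || (A \subset B) -> num_weights D K = 2%N) /\
      (~~ ((A :|: B == setT) || (A \subset B)) -> num_weights D K = 3%N)].
Proof.
move=> _ A0 _ _ B_lt_m q a b c ab D K w1 w2 w3.
have ew1 : w1 = (n_generic F A B C + n_generic F A B C)%N by rewrite /w1 /n_generic; ring.
have ew2 : w2 = (n_generic F A B C + n_ortho F A C)%N by rewrite n_generic_add_ortho.
have ew3 : w3 = (n_ortho F A C + n_ortho F A C)%N by rewrite /w3 /n_ortho; ring.
rewrite ew1 ew2 ew3 {ew1 ew2 ew3}; subst q a b c ab D K w1 w2 w3; split.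
- exact: code_R_linear.
- by rewrite card_S3 card_code // expnD mulnAC.
- exact: min_lee_weight_code.
- split; first exact: freq_zero.
  + exact: freq_generic.
  + by rewrite freq_mixed // PoszM subzn // expn_AB_le_B.
  + by rewrite freq_ortho // subzn // expn_AB_gt0.
  + exact: code_lee_weight.
have BT : B != setT by apply: contraTneq B_lt_m => ->; rewrite cardsT card_ord ltnn.
rewrite num_weights_code //; split; last by rewrite negb_or => /andP[-> ->].
case/orP => [/eqP ABT|AB].
  have AnB : ~~ (A \subset B) by apply: contra BT => AB; rewrite -ABT (setUidPr AB).
  by rewrite ABT eqxx AnB.
have ABnT : A :|: B != setT by apply: contra BT => /eqP ABT; rewrite -ABT (setUidPr AB).
by rewrite AB ABnT.
Qed.
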